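(* Let $w$ be an infinite word on an alphabet $\mathcal{A}$ having infinitely many palindromic prefixes, and let $(n_i)_{i\ge1}$ be the increasing sequence of the lengths of its palindromic prefixes ($n_1=0$). The following are equivalent: (i) $n_{i+1}\le 2n_i+1$ for all $i\ge1$; (ii) there is an admissible function $\psi$ such that $w=w_\psi$.
   Context: The alphabet $\mathcal{A}$ (finite or infinite) is disjoint from $\mathbb{N}^*=\{1,2,\dots\}$; the empty word $\varepsilon$ is a palindrome. An admissible function is a map $\psi:\mathbb{N}^*\to\mathbb{N}^*\sqcup\mathcal{A}$ such that for every $n\ge1$ either $\psi(n)\in\mathcal{A}$ or $1\le\psi(n)\le n-1$. With it associate finite words $\pi_1=\varepsilon$ and, for $i\ge1$: if $\psi(i)\in\mathcal{A}$, $\pi_{i+1}=\pi_i\,\psi(i)\,\pi_i$; if $\psi(i)\in\mathbb{N}^*$, then $\pi_{\psi(i)}$ is a prefix of $\pi_i$, and writing $\pi_i=\pi_{\psi(i)}b_i$ one sets $\pi_{i+1}=\pi_i b_i$ (denoted $\pi_i\pi_{\psi(i)}^{-1}\pi_i$). Each $\pi_i$ is a palindrome and a proper prefix of $\pi_{i+1}$; $w_\psi$ denotes the infinite word having every $\pi_i$ as a prefix. *)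

From mathcomp Require Import all_boot.
Set Implicit Arguments. Unset Strict Implicit. Unset Printing Implicit Defensive.

(* Finite words are [seq A]; infinite words are [nat -> A] (letters indexed from 0). *)

Definition palindrome {A : Type} (s : seq A) : Prop := s = rev s.

Definition wprefix {A : Type} (w : nat -> A) (m : nat) : seq A := mkseq w m.

Definition pal_prefix_len {A : Type} (w : nat -> A) (m : nat) : Prop :=
  palindrome (wprefix w m).

(* psi : N* -> N* ⊔ A is modelled as nat -> nat + A; the value at 0 is irrelevant.
   inl k stands for k ∈ N*, inr a for a ∈ A. *)
Definition admissible {A : Type} (psi : nat -> nat + A) : Prop :=
  forall n, 1 <= n ->
    match psi n with
    | inl k => is_true (1 <= k <= n.-1)
    | inr _ => True
    end.

(* pis psi n = [:: π_1; π_2; ...; π_{n+1}] *)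
Fixpoint pis {A : Type} (psi : nat -> nat + A) (n : nat) : seq (seq A) :=
  match n with
  | 0 => [:: [::]]
  | n'.+1 =>
      let l := pis psi n' in
      let p := last [::] l in            (* π_i with i = n'+1 *)
      let next :=
        match psi n'.+1 with
        | inr a => p ++ a :: p
        | inl k => p ++ drop (size (nth [::] l k.-1)) p
                                          (* π_i π_{ψ(i)}^{-1} π_i *)
        end in
      rcons l next
  end.

(* π_i for i >= 1 (pi psi 0 = π_1 as junk value). *)
Definition pi {A : Type} (psi : nat -> nat + A) (i : nat) : seq A :=
  last [::] (pis psi i.-1).

Definition is_w_psi {A : Type} (psi : nat -> nat + A) (w : nat -> A) : Prop :=
  forall i, 1 <= i -> pi psi i = wprefix w (size (pi psi i)).

From Pilot Require Import Defs.
From mathcomp Require Import all_boot zify.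

Set Implicit Arguments. Unset Strict Implicit. Unset Printing Implicit Defensive.

Local Notation pi := Defs.pi.

(* If p and q are palindromic prefixes of w with |p| < |q|, write q = p b;
   reversing gives q = (rev b) p.  Comparing suffixes, q = p a p when
   |q| = 2|p| + 1, and q = p (drop d p) with d = 2|p| - |q| when |q| <= 2|p|.
   In the latter case p = u v and q = u v v with |u| = d, and since u v and
   u v v are palindromes so is u.  Under (i) this lets one choose psi(i)
   (the letter w(n_i), or the index of the palindromic prefix of length d)
   so that pi_i is the prefix of length n_i.  Conversely the |pi_j| are
   palindromic prefix lengths with |pi_1| = 0 and
   |pi_j| < |pi_(j+1)| <= 2|pi_j| + 1; bracketing |pi_j| <= n_i < |pi_(j+1)|
   gives n_(i+1) <= |pi_(j+1)| <= 2 n_i + 1. *)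

Lemma ltn_chain (f : nat -> nat) i j :
  (forall k, i <= k < j -> f k < f k.+1) -> i < j -> f i < f j.
Proof.
move=> f_ltS lt_ij.
have f_homo : {in [pred k | i <= k <= j] &, {homo f : a b / a < b}}.
  apply: homo_ltn_in => [|a b /andP[le_ia _] /andP[_ le_bj] c /andP[lt_ac lt_cb]
                        | k /andP[le_ik _] /andP[_ lt_kj]].
  - exact: ltn_trans.
  - by rewrite inE; lia.
  - by apply: f_ltS; lia.
by apply: f_homo; rewrite // inE leqnn ltnW.
Qed.

Section Palindromes.
Variable T : Type.
Implicit Types (a : T) (p b u v : seq T).

Lemma palindrome_cat_cons p a : palindrome p -> palindrome (p ++ a :: p).
Proof. by rewrite /palindrome rev_cat rev_cons cat_rcons => <-. Qed.

Lemma palindrome_cat_dup u v :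
  palindrome (u ++ v) -> palindrome (u ++ v ++ v) <-> palindrome u.
Proof.
rewrite /palindrome => Puv.
have -> : rev (u ++ v ++ v) = rev v ++ u ++ v by rewrite catA rev_cat -Puv.
rewrite rev_cat in Puv; split => [Puvv | Pu].
- have := congr1 (take (size u) \o drop (size v)) Puvv => /=.
  rewrite catA {1}Puv -catA !drop_size_cat ?size_rev //.
  by rewrite !take_size_cat ?size_rev // => ->.
- by rewrite catA [in RHS]catA {2}Pu -Puv.
Qed.

Lemma palindrome_cat_drop p b :
  palindrome p -> palindrome (p ++ b) -> drop (size p) (rev b ++ p) = b.
Proof. by rewrite /palindrome rev_cat => <- <-; rewrite drop_size_cat. Qed.

Lemma palindrome_cat_short p b : palindrome p -> palindrome (p ++ b) ->
  size b <= size p -> b = drop (size p - size b) p.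
Proof.
move=> Pp Ppb le_bp; rewrite -{1}(palindrome_cat_drop Pp Ppb) drop_cat size_rev.
by rewrite ltnNge le_bp.
Qed.

Lemma palindrome_cat_long p b : palindrome p -> palindrome (p ++ b) ->
  size b = (size p).+1 -> behead b = p.
Proof.
move=> Pp Ppb size_b; rewrite -(palindrome_cat_drop Pp Ppb) drop_cat size_rev.
by rewrite size_b ltnSn -drop1 drop_size_cat // size_drop size_rev size_b subSnn.
Qed.

End Palindromes.

Section PalindromicPrefixes.
Variables (T : Type) (w : nat -> T).

Lemma take_wprefix m N : m <= N -> take m (wprefix w N) = wprefix w m.
Proof. by move=> le_mN; rewrite /wprefix /mkseq -map_take take_iota (minn_idPl _). Qed.

Lemma wprefix_take_drop m N : m <= N ->
  wprefix w N = wprefix w m ++ drop m (wprefix w N).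
Proof. by move=> le_mN; rewrite -{1}(cat_take_drop m (wprefix w N)) take_wprefix. Qed.

Lemma wprefix_pal_long m N : pal_prefix_len w m -> pal_prefix_len w N ->
  N = m.*2.+1 -> wprefix w N = wprefix w m ++ w m :: wprefix w m.
Proof.
move=> Pm PN eN; have lt_mN : m < N by lia.
have q_split := wprefix_take_drop (ltnW lt_mN).
rewrite (drop_nth (w 0)) ?size_mkseq // nth_mkseq // in q_split.
rewrite {1}q_split; congr (_ ++ _ :: _).
have := @palindrome_cat_long _ (wprefix w m) (w m :: drop m.+1 (wprefix w N)).
by apply=> //; [rewrite /pal_prefix_len -q_split | rewrite /= size_drop !size_mkseq; lia].
Qed.

Lemma wprefix_pal_short m N : pal_prefix_len w m -> pal_prefix_len w N ->
  m <= N <= m.*2 ->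
  pal_prefix_len w (m.*2 - N) /\
  wprefix w N = wprefix w m ++ drop (m.*2 - N) (wprefix w m).
Proof.
move=> Pm PN /andP[le_mN le_Nm2]; set d := m.*2 - N.
have q_split := wprefix_take_drop le_mN.
have b_eq : drop m (wprefix w N) = drop d (wprefix w m).
  rewrite (palindrome_cat_short (b := drop m (wprefix w N)) Pm).
  - by rewrite size_drop !size_mkseq; congr drop; lia.
  - by rewrite -q_split.
  - by rewrite size_drop !size_mkseq; lia.
rewrite b_eq in q_split; split=> //.
rewrite /pal_prefix_len -(take_wprefix (_ : d <= m)); last by lia.
apply/(palindrome_cat_dup (v := drop d (wprefix w m))).
  by rewrite (cat_take_drop d).
by rewrite catA (cat_take_drop d) -q_split.
Qed.

End PalindromicPrefixes.

Section AdmissibleFunction.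
Variables (T : Type) (psi : nat -> nat + T).

Lemma size_pis m : size (pis psi m) = m.+1.
Proof. by elim: m => //= m IH; rewrite size_rcons IH. Qed.

Lemma nth_pis m j : j <= m -> nth [::] (pis psi m) j = pi psi j.+1.
Proof.
elim: m => [|m IH] in j *; first by case: j.
rewrite leq_eqVlt => /predU1P[-> | lt_jm].
  by rewrite /= nth_rcons size_pis ltnn eqxx /pi last_rcons.
by rewrite /= nth_rcons size_pis lt_jm IH.
Qed.

Lemma pi_step_inr i a : 0 < i -> psi i = inr a ->
  pi psi i.+1 = pi psi i ++ a :: pi psi i.
Proof. by case: i => // i _ psi_i; rewrite {1}/pi /= psi_i last_rcons. Qed.

Lemma pi_step_inl i k : 0 < i -> psi i = inl k -> k <= i ->
  pi psi i.+1 = pi psi i ++ drop (size (pi psi k)) (pi psi i).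
Proof.
case: i => // i _ psi_i le_ki.
by rewrite {1}/pi /= psi_i last_rcons nth_pis; case: k psi_i le_ki.
Qed.

Hypothesis psi_adm : admissible psi.

Lemma size_pi_ltS i : 0 < i -> size (pi psi i) < size (pi psi i.+1).
Proof.
elim/ltn_ind: i => i IH i_gt0.
have := psi_adm i_gt0; case psi_i: (psi i) => [k | a] => [/andP[k_gt0 le_ki] | _].
- have lt_ki : size (pi psi k) < size (pi psi i).
    apply: (@ltn_chain (fun l => size (pi psi l))) => [l /andP[le_kl lt_li] |]; last by lia.
    by apply: IH; lia.
  by rewrite (pi_step_inl i_gt0 psi_i) ?size_cat ?size_drop; lia.
- by rewrite (pi_step_inr i_gt0 psi_i) size_cat /= addnS ltnS leq_addr.
Qed.

Lemma size_pi_leS i : 0 < i -> size (pi psi i.+1) <= (size (pi psi i)).*2.+1.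
Proof.
move=> i_gt0; have := psi_adm i_gt0; case psi_i: (psi i) => [k | a] => [/andP[_ le_ki] | _].
- by rewrite (pi_step_inl i_gt0 psi_i) ?size_cat ?size_drop; lia.
- by rewrite (pi_step_inr i_gt0 psi_i) size_cat /= addnS -addnn.
Qed.

Lemma size_pi_bracket x :
  exists2 i, 0 < i & size (pi psi i) <= x < size (pi psi i.+1).
Proof.
elim: x => [|x [i i_gt0 /andP[le_ix lt_xi]]].
  by exists 1 => //; apply: size_pi_ltS.
case: (ltnP x.+1 (size (pi psi i.+1))) => [lt_xi' | le_ix'].
  by exists i => //; rewrite lt_xi' andbT ltnW.
exists i.+1 => //; rewrite le_ix' /=.
by apply: leq_trans (size_pi_ltS _); [rewrite ltnS | ].
Qed.

Variable w : nat -> T.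
Hypothesis psi_w : is_w_psi psi w.

Lemma palindrome_pi i : 0 < i -> palindrome (pi psi i).
Proof.
elim/ltn_ind: i => -[// | [// | i]] IH _.
have i_gt0 : 0 < i.+1 by [].
have Pi : palindrome (pi psi i.+1) by apply: IH.
have := psi_adm i_gt0; case psi_i: (psi i.+1) => [k | a] => [/andP[k_gt0 le_ki] | _].
- have lt_ki : size (pi psi k) < size (pi psi i.+1).
    apply: (@ltn_chain (fun l => size (pi psi l))) => [l /andP[le_kl _] |]; last by lia.
    by apply: size_pi_ltS; lia.
  have pk_pref : take (size (pi psi k)) (pi psi i.+1) = pi psi k.
    by rewrite (psi_w i_gt0) take_wprefix 1?ltnW // -psi_w.
  rewrite (pi_step_inl i_gt0 psi_i); last by lia.
  set v := drop _ (pi psi i.+1).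
  have pi_split : pi psi i.+1 = pi psi k ++ v by rewrite -{1}pk_pref cat_take_drop.
  rewrite {1}pi_split -catA; apply/palindrome_cat_dup; first by rewrite -pi_split.
  by apply: IH; lia.
- by rewrite (pi_step_inr i_gt0 psi_i); apply: palindrome_cat_cons.
Qed.

Lemma pal_prefix_len_pi i : 0 < i -> pal_prefix_len w (size (pi psi i)).
Proof. by move=> i_gt0; rewrite /pal_prefix_len -psi_w //; apply: palindrome_pi. Qed.

End AdmissibleFunction.

Section PalindromicLengths.
Variables (T : Type) (w : nat -> T) (n : nat -> nat).
Hypothesis n_ltS : forall i, 1 <= i -> n i < n i.+1.
Hypothesis n_enum : forall m, pal_prefix_len w m <-> exists i, 1 <= i /\ n i = m.

Lemma leq_n : {in [pred i | 0 < i] &, {mono n : i j / i <= j}}.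
Proof.
apply: leq_mono_in => i j; rewrite !inE => i_gt0 _.
by apply: ltn_chain => k /andP[le_ik _]; apply: n_ltS; lia.
Qed.

Lemma ltn_n : {in [pred i | 0 < i] &, {mono n : i j / i < j}}.
Proof. exact: leqW_mono_in leq_n. Qed.

Lemma pal_prefix_len_n i : 0 < i -> pal_prefix_len w (n i).
Proof. by move=> i_gt0; apply/n_enum; exists i. Qed.

Lemma n1 : n 1 = 0.
Proof.
have [i [i_gt0 ni]] : exists i, 1 <= i /\ n i = 0 by apply/n_enum.
have : n 1 <= n i by rewrite leq_n.
by rewrite ni leqn0 => /eqP.
Qed.

Definition pal_index (d j : nat) : nat := head 0 [seq k <- iota 1 j | n k == d].

Lemma pal_indexP d j : pal_prefix_len w d -> d < n j -> 0 < j ->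
  1 <= pal_index d j.-1 <= j.-1 /\ n (pal_index d j.-1) = d.
Proof.
move=> /n_enum[i [i_gt0 ni]] lt_dj j_gt0.
have lt_ij : i < j by rewrite -ltn_n // ni.
have i_mem : i \in [seq k <- iota 1 j.-1 | n k == d].
  by rewrite mem_filter ni eqxx mem_iota /=; lia.
rewrite /pal_index; case E: [seq k <- _ | _] i_mem => [|k s] //= _.
have : k \in [seq k <- iota 1 j.-1 | n k == d] by rewrite E mem_head.
by rewrite mem_filter mem_iota => /andP[/eqP nk]; split => //; lia.
Qed.

Hypothesis n_leS : forall i, 1 <= i -> n i.+1 <= (n i).*2.+1.

Definition psi_of_n (j : nat) : nat + T :=
  if n j.+1 == (n j).*2.+1 then inr (w (n j))
  else inl (pal_index ((n j).*2 - n j.+1) j.-1).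

Lemma pal_prefix_len_gap j : 0 < j -> n j.+1 != (n j).*2.+1 ->
  let d := (n j).*2 - n j.+1 in
  [/\ pal_prefix_len w d, d < n j &
      wprefix w (n j.+1) = wprefix w (n j) ++ drop d (wprefix w (n j))].
Proof.
move=> j_gt0 /eqP ne d; have := n_ltS j_gt0; have := n_leS j_gt0 => le_S lt_S.
have [|Pd ->] := wprefix_pal_short (pal_prefix_len_n j_gt0) (pal_prefix_len_n (ltn0Sn j)).
  by apply/andP; split; lia.
by split=> //; rewrite /d; lia.
Qed.

Lemma admissible_psi_of_n : admissible psi_of_n.
Proof.
move=> j j_gt0; rewrite /psi_of_n; case: ifPn => // ne.
have [Pd lt_dj _] := pal_prefix_len_gap j_gt0 ne.
by have [] := pal_indexP Pd lt_dj j_gt0.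
Qed.

Lemma pi_psi_of_n j : 0 < j -> pi psi_of_n j = wprefix w (n j).
Proof.
elim/ltn_ind: j => -[// | [_ _ | i IH _]]; first by rewrite n1.
have i_gt0 : 0 < i.+1 by [].
case: (eqVneq (n i.+2) (n i.+1).*2.+1) => [eq_long | ne].
- rewrite (pi_step_inr (a := w (n i.+1)) i_gt0); last by rewrite /psi_of_n eq_long eqxx.
  rewrite IH // (wprefix_pal_long (pal_prefix_len_n i_gt0) _ eq_long) //.
  exact: pal_prefix_len_n.
- have [Pd lt_di eq_short] := pal_prefix_len_gap i_gt0 ne.
  have [/andP[k_gt0 le_ki] nk] := pal_indexP Pd lt_di i_gt0.
  set k := pal_index _ _ in k_gt0 le_ki nk.
  rewrite (@pi_step_inl _ _ _ k i_gt0); last by lia.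
  + by rewrite !IH ?size_mkseq ?nk -?eq_short //; lia.
  + by rewrite /psi_of_n /= (negPf ne).
Qed.

End PalindromicLengths.

Theorem theorem4p2 (A : Type) (w : nat -> A)
  (Hinf : forall m, exists k, m <= k /\ pal_prefix_len w k)
  (n : nat -> nat)
  (Hn_incr : forall i, 1 <= i -> n i < n i.+1)
  (Hn_enum : forall m, pal_prefix_len w m <-> exists i, 1 <= i /\ n i = m) :
  (forall i, 1 <= i -> n i.+1 <= (n i).*2.+1) <->
  (exists psi : nat -> nat + A, admissible psi /\ is_w_psi psi w).
Proof.
split=> [n_leS | [psi [psi_adm psi_w]] i i_gt0].
- exists (psi_of_n w n); split; first exact: admissible_psi_of_n Hn_incr Hn_enum n_leS.
  by move=> i i_gt0; rewrite (pi_psi_of_n Hn_incr Hn_enum n_leS) // size_mkseq.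
- have [j j_gt0 /andP[le_jn lt_nj]] := size_pi_bracket psi_adm (n i).
  have [m [m_gt0 nm]] := proj1 (Hn_enum _) (pal_prefix_len_pi psi_adm psi_w (ltn0Sn j)).
  have lt_im : i < m by rewrite -(ltn_n Hn_incr) // nm.
  apply: (@leq_trans (n m)); first by rewrite (leq_n Hn_incr).
  by rewrite nm (leq_trans (size_pi_leS psi_adm j_gt0)) // ltnS leq_double.
Qed.
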